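(* Let $L=\langle S,A,\to\rangle$ be a labelled transition system and $s,t\in S$. Then $s\equiv_b t$ if and only if $s\equiv_\emptyset t$.
   Context: An LTS is $\langle S,A,\to\rangle$ with states $S$, actions $A$ containing the internal action $\tau$, and $\to\subseteq S\times A\times S$; write $s\xrightarrow{a}t$. In both games below, Duplicator wins a finite play if Spoiler gets stuck, and an infinite play if it contains infinitely many configurations with reward $\checkmark$; all other plays are won by Spoiler. Branching bisimulation game: Spoiler-owned configurations $\langle (s,t),c,r\rangle_S$ and Duplicator-owned $\langle (s,t),c,r\rangle_D$ with $(s,t)\in S\times S$, $c\in (A\times S)\cup\{\dagger\}$, $r\in\{*,\checkmark\}$. From $\langle (s,t),c,r\rangle_S$ Spoiler may: (1) select $s\xrightarrow{a}s'$ and move to $\langle (s,t),(a,s'),*\rangle_D$ if $c=(a,s')$ or $c=\dagger$, and to $\langle (s,t),(a,s'),\checkmark\rangle_D$ otherwise; (2) select $t\xrightarrow{a}t'$ and move to $\langle (t,s),(a,t'),\checkmark\rangle_D$. From $\langle (u,v),(a,u'),r\rangle_D$ Duplicator may: (1) if $a=\tau$, move to $\langle (u',v),\dagger,\checkmark\rangle_S$; (2) for some $v\xrightarrow{a}v'$, move to $\langle (u',v'),\dagger,\checkmark\rangle_S$; (3) for some $v\xrightarrow{\tau}v'$, move to $\langle (u,v'),(a,u'),*\rangle_S$. $s\equiv_b t$ iff Duplicator has a strategy winning all plays from $\langle (s,t),\dagger,*\rangle_S$. $\emptyset$-generic bisimulation game: with formal tags $\frown,\smile$, Spoiler-owned configurations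 $\langle (s,t),c,m,r\rangle_S$ and Duplicator-owned $\langle (s,t),c,m,r\rangle_D$ with $(s,t)\in S\times S$, $c\in (A\times S)\cup\{\dagger\}$, $m\in (S\times\{\frown,\smile\})\cup\{\dagger\}$, $r\in\{*,\checkmark\}$. Spoiler from $\langle (s,t),c,m,r\rangle_S$ may: (S1) move to $\langle (s,t),c,m,*\rangle_D$ if $c\neq\dagger$; (S2a) for some $s\xrightarrow{a}s'$, move to $\langle (s,t),(a,s'),(t,\frown),*\rangle_D$ if $c=\dagger$; (S2b) for some $s\xrightarrow{a}s'$, move to $\langle (s,t),(a,s'),(t,\frown),\checkmark\rangle_D$ if $c\neq (a,s')$; (S3) for some $t\xrightarrow{a}t'$, move to $\langle (t,s),(a,t'),(s,\frown),\checkmark\rangle_D$. Duplicator from $\langle (u,v),(a,u'),(\bar v,f),r\rangle_D$ may: (D1) move to $\langle (u',\bar v),\dagger,\dagger,\checkmark\rangle_S$ if $a=\tau$; (D2) if $f=\frown$ and $\bar v\xrightarrow{a}v'$: (a) move to $\langle (u',v'),(a,u'),(v',\smile),*\rangle_S$ or (b) move to $\langle (u',v'),\dagger,\dagger,\checkmark\rangle_S$; (D3) for some $\bar v\xrightarrow{\tau}v'$: (a) move to $\langle (u,v'),(a,u'),(v',f),*\rangle_S$, or (b) only if $f=\smile$, move to $\langle (u',v'),\dagger,\dagger,\checkmark\rangle_S$. $s\equiv_\emptyset t$ iff Duplicator has a strategy winning all plays from $\langle (s,t),\dagger,\dagger,*\rangle_S$. *)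

From Stdlib Require Import List.
Import ListNotations.

Set Implicit Arguments.

Inductive player := Spoiler | Duplicator.

Record game := Game {
  conf : Type;
  owner : conf -> player;
  move : conf -> conf -> Prop;
  checked : conf -> Prop           (* reward is the tick (checkmark) *)
}.

(** A (history-dependent) Duplicator strategy: given the current configuration
    and the list of previous configurations (most recent first), it proposes
    the next configuration. *)
Definition dstrategy (G : game) := conf G -> list (conf G) -> conf G.

(** Finite play prefixes from [c0] consistent with [sigma], represented as
    (current configuration, reversed list of previous configurations). *)
Inductive consistent (G : game) (sigma : dstrategy G) (c0 : conf G)
  : conf G -> list (conf G) -> Prop :=
| cons_init : consistent sigma c0 c0 []
| cons_spoiler c h c' :
    consistent sigma c0 c h -> owner G c = Spoiler -> move G c c' ->
    consistent sigma c0 c' (c :: h)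
| cons_duplicator c h :
    consistent sigma c0 c h -> owner G c = Duplicator ->
    consistent sigma c0 (sigma c h) (c :: h).

Definition past (G : game) (f : nat -> conf G) (n : nat) : list (conf G) :=
  rev (map f (seq 0 n)).

Definition infinite_play (G : game) (sigma : dstrategy G) (c0 : conf G)
  (f : nat -> conf G) : Prop :=
  f 0 = c0 /\
  forall n,
    (owner G (f n) = Spoiler /\ move G (f n) (f (S n))) \/
    (owner G (f n) = Duplicator /\ f (S n) = sigma (f n) (@past G f n)).

(** [sigma] wins all plays from [c0]:
    - Duplicator is never stuck, i.e. at every reachable Duplicator
      configuration the strategy proposes a legal move (so every finite
      maximal play ends with Spoiler stuck, which Duplicator wins);
    - every infinite play contains infinitely many checked configurations. *)
Definition winning (G : game) (sigma : dstrategy G) (c0 : conf G) : Prop :=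
  (forall c h, consistent sigma c0 c h -> owner G c = Duplicator ->
               move G c (sigma c h)) /\
  (forall f, infinite_play sigma c0 f ->
             forall N, exists n, N <= n /\ checked G (f n)).

Definition duplicator_wins (G : game) (c0 : conf G) : Prop :=
  exists sigma : dstrategy G, winning sigma c0.

Section LTS.
Variables (S A : Type) (tau : A) (trans : S -> A -> S -> Prop).

(** reward: [true] = checkmark, [false] = * ; [None] encodes the dagger. *)

Record bconf := BConf {
  b_own : player; b_l : S; b_r : S; b_c : option (A * S); b_rew : bool }.

Inductive bmove : bconf -> bconf -> Prop :=
| bS1_same s t c r a s' :
    trans s a s' -> (c = Some (a, s') \/ c = None) ->
    bmove (BConf Spoiler s t c r) (BConf Duplicator s t (Some (a, s')) false)
| bS1_other s t c r a s' :
    trans s a s' -> ~ (c = Some (a, s') \/ c = None) ->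
    bmove (BConf Spoiler s t c r) (BConf Duplicator s t (Some (a, s')) true)
| bS2 s t c r a t' :
    trans t a t' ->
    bmove (BConf Spoiler s t c r) (BConf Duplicator t s (Some (a, t')) true)
| bD1 u v a u' r :
    a = tau ->
    bmove (BConf Duplicator u v (Some (a, u')) r) (BConf Spoiler u' v None true)
| bD2 u v a u' r v' :
    trans v a v' ->
    bmove (BConf Duplicator u v (Some (a, u')) r) (BConf Spoiler u' v' None true)
| bD3 u v a u' r v' :
    trans v tau v' ->
    bmove (BConf Duplicator u v (Some (a, u')) r)
          (BConf Spoiler u v' (Some (a, u')) false).

Definition branching_game : game :=
  @Game bconf b_own bmove (fun c => b_rew c = true).

Definition branching_bisimilar (s t : S) : Prop :=
  @duplicator_wins branching_game (BConf Spoiler s t None false).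

Inductive tag := frown | smile.

Record econf := EConf {
  e_own : player; e_l : S; e_r : S; e_c : option (A * S);
  e_m : option (S * tag); e_rew : bool }.

Inductive emove : econf -> econf -> Prop :=
| eS1 s t c m r :
    c <> None ->
    emove (EConf Spoiler s t c m r) (EConf Duplicator s t c m false)
| eS2a s t m r a s' :
    trans s a s' ->
    emove (EConf Spoiler s t None m r)
          (EConf Duplicator s t (Some (a, s')) (Some (t, frown)) false)
| eS2b s t c m r a s' :
    trans s a s' -> c <> Some (a, s') ->
    emove (EConf Spoiler s t c m r)
          (EConf Duplicator s t (Some (a, s')) (Some (t, frown)) true)
| eS3 s t c m r a t' :
    trans t a t' ->
    emove (EConf Spoiler s t c m r)
          (EConf Duplicator t s (Some (a, t')) (Some (s, frown)) true)
| eD1 u v a u' vb f r :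
    a = tau ->
    emove (EConf Duplicator u v (Some (a, u')) (Some (vb, f)) r)
          (EConf Spoiler u' vb None None true)
| eD2a u v a u' vb r v' :
    trans vb a v' ->
    emove (EConf Duplicator u v (Some (a, u')) (Some (vb, frown)) r)
          (EConf Spoiler u' v' (Some (a, u')) (Some (v', smile)) false)
| eD2b u v a u' vb r v' :
    trans vb a v' ->
    emove (EConf Duplicator u v (Some (a, u')) (Some (vb, frown)) r)
          (EConf Spoiler u' v' None None true)
| eD3a u v a u' vb f r v' :
    trans vb tau v' ->
    emove (EConf Duplicator u v (Some (a, u')) (Some (vb, f)) r)
          (EConf Spoiler u v' (Some (a, u')) (Some (v', f)) false)
| eD3b u v a u' vb r v' :
    trans vb tau v' ->
    emove (EConf Duplicator u v (Some (a, u')) (Some (vb, smile)) r)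
          (EConf Spoiler u' v' None None true).

Definition empty_generic_game : game :=
  @Game econf e_own emove (fun c => e_rew c = true).

Definition empty_generic_bisimilar (s t : S) : Prop :=
  @duplicator_wins empty_generic_game (EConf Spoiler s t None None false).

End LTS.

(* Both games characterise the relations R that are symmetric and in which every
   step u -a-> u' of a related pair (u, v) is answered from v by silent steps
   through states related to u, followed by a skipped tau or an a-step into a
   state related to u'.  Given such an R, Duplicator always follows a shortest
   answer: an unrewarded round keeps the challenge pending and shortens its
   shortest answer, so rewards recur.  Conversely, the pairs reached at
   Spoiler's configurations under a winning strategy form such an R: were a
   challenge unanswerable, Duplicator could only postpone it by silent steps
   while Spoiler repeats it forever, an unrewarded play. *)
From Stdlib Require Import List Arith Lia Wf_nat Classical ClassicalEpsilon.
Import ListNotations.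

Set Implicit Arguments.

Lemma snoc_chain_limit (X : Type) (d : X) (l : nat -> list X) :
  l 0 <> [] -> (forall k, exists x, l (S k) = l k ++ [x]) ->
  forall k, l k = map (fun n => nth n (l n) d) (seq 0 (length (l k))).
Proof.
  intros Hl0 Hl.
  assert (Hlen : forall k, length (l k) = length (l 0) + k).
  { induction k as [|k IH]; [lia|]. destruct (Hl k) as [x ->].
    rewrite length_app, IH. simpl. lia. }
  assert (Hprefix : forall i j, i <= j -> exists s, l j = l i ++ s).
  { induction 1 as [|j _ [s Hs]]; [exists []; symmetry; apply app_nil_r|].
    destruct (Hl j) as [x ->]. exists (s ++ [x]). rewrite Hs, app_assoc. reflexivity. }
  assert (Hnth : forall i j, i < length (l i) -> i < length (l j) ->
                             nth i (l j) d = nth i (l i) d).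
  { intros i j Hi Hj. destruct (Nat.le_ge_cases i j) as [Hij|Hji].
    - destruct (Hprefix i j Hij) as [s ->]. apply app_nth1, Hi.
    - destruct (Hprefix j i Hji) as [s ->]. symmetry. apply app_nth1, Hj. }
  intros k. set (g := fun n => nth n (l n) d).
  apply nth_ext with d d; [rewrite length_map, length_seq; reflexivity|].
  intros i Hi.
  rewrite (nth_indep (map g _) d (g 0)) by (rewrite length_map, length_seq; exact Hi).
  rewrite map_nth, seq_nth by exact Hi. apply Hnth; [|exact Hi].
  rewrite Hlen. destruct (l 0); [contradiction|simpl; lia].
Qed.

Section Plays.
Variables (G : game) (sigma : dstrategy G) (c0 : conf G).

Lemma consistent_nil c : consistent sigma c0 c [] -> c = c0.
Proof. inversion 1; reflexivity. Qed.

Lemma consistent_cons c' c h :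
  consistent sigma c0 c' (c :: h) ->
  consistent sigma c0 c h /\
  ((owner G c = Spoiler /\ move G c c') \/
   (owner G c = Duplicator /\ c' = sigma c h)).
Proof. inversion 1; subst; auto. Qed.

Lemma past_S (f : nat -> conf G) n : past G f (S n) = f n :: past G f n.
Proof. unfold past. rewrite seq_S, map_app, rev_app_distr. reflexivity. Qed.

Lemma consistent_past_le (f : nat -> conf G) m n : m <= n ->
  consistent sigma c0 (f n) (past G f n) -> consistent sigma c0 (f m) (past G f m).
Proof.
  induction 1 as [|n _ IH]; intros Hn; [exact Hn|].
  rewrite past_S in Hn. apply IH, (consistent_cons Hn).
Qed.

Lemma infinite_play_of_consistent_past (f : nat -> conf G) :
  (forall n, consistent sigma c0 (f n) (past G f n)) -> infinite_play sigma c0 f.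
Proof.
  intros Hf. split.
  - apply consistent_nil, (Hf 0).
  - intros n. specialize (Hf (S n)). rewrite past_S in Hf. apply (consistent_cons Hf).
Qed.

Lemma consistent_extension_play (Q : conf G -> list (conf G) -> Prop) c h :
  (forall c h, Q c h -> consistent sigma c0 c h) ->
  (forall c h, Q c h -> exists c', Q c' (c :: h)) ->
  Q c h ->
  exists f, infinite_play sigma c0 f /\
            forall k, Q (f (length h + k)) (past G f (length h + k)).
Proof.
  intros HQc HQs HQ.
  pose (extend := fun p : conf G * list (conf G) =>
          (epsilon (inhabits c) (fun c' => Q c' (fst p :: snd p)), fst p :: snd p)).
  pose (hist := fun k => Nat.iter k extend (c, h)).
  assert (Hhist : forall k, Q (fst (hist k)) (snd (hist k))).
  { induction k as [|k IH]; [exact HQ|]. simpl. apply epsilon_spec, HQs, IH. }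
  pose (full := fun k => rev (fst (hist k) :: snd (hist k))).
  assert (Hlen : forall k, length (full k) = S (length h + k)).
  { intros k. unfold full. rewrite length_rev. simpl. f_equal.
    induction k as [|k IH]; simpl; lia. }
  pose (f := fun n => nth n (full n) c).
  assert (Hfull : forall k, full k = map f (seq 0 (length (full k)))).
  { apply snoc_chain_limit.
    - unfold full. simpl. destruct (rev h); discriminate.
    - intros k. exists (fst (hist (S k))). reflexivity. }
  assert (Hf : forall k, Q (f (length h + k)) (past G f (length h + k))).
  { intros k.
    assert (E : fst (hist k) :: snd (hist k) = f (length h + k) :: past G f (length h + k)).
    { rewrite <- past_S, <- Hlen. unfold past. rewrite <- Hfull. unfold full.
      symmetry. apply rev_involutive. }
    injection E as E1 E2. rewrite <- E1, <- E2. apply Hhist. }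
  exists f. split; [|exact Hf].
  apply infinite_play_of_consistent_past. intros n.
  apply (consistent_past_le f (n := length h + n)); [lia|]. apply HQc, Hf.
Qed.

Hypothesis W : winning sigma c0.

Lemma no_unrewarded_trap (Q : conf G -> list (conf G) -> Prop) c h :
  (forall c h, Q c h -> consistent sigma c0 c h) ->
  (forall c h, Q c h -> ~ checked G c) ->
  (forall c h, Q c h -> exists c', Q c' (c :: h)) ->
  ~ Q c h.
Proof.
  intros HQc HQn HQs HQ.
  destruct (consistent_extension_play Q c h HQc HQs HQ) as [f [Hplay HQf]].
  destruct (proj2 W f Hplay (length h)) as [n [Hn Hchk]].
  replace n with (length h + (n - length h)) in Hchk by lia.
  exact (HQn _ _ (HQf _) Hchk).
Qed.

Lemma no_stalling (X : Type) (P : X -> Prop) (sp dp : X -> conf G) :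
  (forall x, owner G (sp x) = Spoiler /\ move G (sp x) (dp x)) ->
  (forall x, owner G (dp x) = Duplicator) ->
  (forall x, ~ checked G (sp x) /\ ~ checked G (dp x)) ->
  (forall x h, P x -> consistent sigma c0 (dp x) h ->
               exists x', P x' /\ sigma (dp x) h = sp x') ->
  forall x h, P x -> ~ consistent sigma c0 (sp x) h.
Proof.
  intros Hsp Hdp Hunc Hsigma x h Hx Hc.
  apply (no_unrewarded_trap
           (fun c h => consistent sigma c0 c h /\
                       exists x, P x /\ (c = sp x \/ c = dp x)) (sp x) h).
  - intros ? ? [Hc' _]. exact Hc'.
  - intros ? ? [_ [y [_ [-> | ->]]]]; apply Hunc.
  - intros ? ? [Hc' [y [Hy [-> | ->]]]].
    + exists (dp y). split; [|eauto].
      apply cons_spoiler; [exact Hc'|apply Hsp|apply Hsp].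
    + destruct (Hsigma y _ Hy Hc') as [y' [Hy' E]].
      exists (sp y'). rewrite <- E. split; [|eauto].
      apply cons_duplicator; [exact Hc'|apply Hdp].
  - eauto.
Qed.

End Plays.

Lemma no_infinite_descent (g : nat -> nat) : ~ (forall n, g (S n) < g n).
Proof.
  intros Hg.
  assert (H : forall n, g n + n <= g 0).
  { induction n as [|n IH]; [lia|]. specialize (Hg n). lia. }
  specialize (H (S (g 0))). lia.
Qed.

Section RankedStrategy.
Variables (G : game) (c0 : conf G) (Inv : conf G -> Prop) (rank : conf G -> nat).

Definition good_reply (c c' : conf G) : Prop :=
  move G c c' /\ Inv c' /\ (checked G c' \/ rank c' < rank c).

Hypothesis Inv_init : Inv c0.
Hypothesis Inv_spoiler :
  forall c c', Inv c -> owner G c = Spoiler -> move G c c' -> Inv c'.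
Hypothesis good_reply_exists :
  forall c, Inv c -> owner G c = Duplicator -> exists c', good_reply c c'.
(* The premise [move G c c'] excludes the initial configuration, whose rank is
   meaningless. *)
Hypothesis rank_spoiler_descent :
  forall c c' c'', move G c c' -> owner G c' = Spoiler -> ~ checked G c' ->
                   move G c' c'' -> ~ checked G c'' -> rank c'' < rank c'.

Definition ranked_strategy : dstrategy G :=
  fun c _ => epsilon (inhabits c) (good_reply c).

Lemma ranked_strategy_good c h :
  Inv c -> owner G c = Duplicator -> good_reply c (ranked_strategy c h).
Proof. intros HI Ho. unfold ranked_strategy. apply epsilon_spec, good_reply_exists; assumption. Qed.

Lemma ranked_play_step f : infinite_play ranked_strategy c0 f ->
  forall n, Inv (f n) /\ move G (f n) (f (S n)).
Proof.
  intros [Hf0 Hf].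
  assert (Hstep : forall n, Inv (f n) -> Inv (f (S n)) /\ move G (f n) (f (S n))).
  { intros n HI. destruct (Hf n) as [[Ho Hm]|[Ho E]].
    - split; [eapply Inv_spoiler; eassumption|exact Hm].
    - rewrite E. destruct (ranked_strategy_good (past G f n) HI Ho) as [Hm [HI' _]].
      split; assumption. }
  assert (HI : forall n, Inv (f n)).
  { induction n as [|n IH]; [rewrite Hf0; exact Inv_init|apply (Hstep n IH)]. }
  intros n. split; [apply HI|apply (Hstep n (HI n))].
Qed.

Lemma ranked_consistent_inv c h : consistent ranked_strategy c0 c h -> Inv c.
Proof.
  induction 1 as [|c h c' _ IH Ho Hm|c h _ IH Ho].
  - exact Inv_init.
  - eapply Inv_spoiler; eassumption.
  - apply ranked_strategy_good; assumption.
Qed.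

Lemma ranked_play_checked_often f : infinite_play ranked_strategy c0 f ->
  forall N, exists n, N <= n /\ checked G (f n).
Proof.
  intros Hplay N. apply NNPP. intros Hnone.
  assert (Hunc : forall n, N <= n -> ~ checked G (f n)) by eauto.
  apply (no_infinite_descent (fun k => rank (f (S N + k)))). intros k.
  rewrite Nat.add_succ_r. set (n := S N + k).
  destruct (ranked_play_step Hplay n) as [HI Hm].
  destruct (proj2 Hplay n) as [[Ho _]|[Ho E]].
  - eapply rank_spoiler_descent; [apply (ranked_play_step Hplay (N + k))|exact Ho|
      apply Hunc; lia|exact Hm|apply Hunc; lia].
  - destruct (ranked_strategy_good (past G f n) HI Ho) as [_ [_ [Hchk|Hlt]]];
      rewrite <- E in *; [|exact Hlt].
    exfalso. apply (Hunc (S n)); [lia|exact Hchk].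
Qed.

Lemma ranked_strategy_winning : winning ranked_strategy c0.
Proof.
  split; [|exact ranked_play_checked_often].
  intros c h Hc Ho. apply (ranked_strategy_good h (ranked_consistent_inv Hc) Ho).
Qed.

End RankedStrategy.

Section LTS.
Variables (State Label : Type) (tau : Label) (trans : State -> Label -> State -> Prop).

Section Answers.
Variable R : State -> State -> Prop.

Inductive answer (u : State) (a : Label) (u' : State) : nat -> State -> Prop :=
| answer_tau v : a = tau -> R u' v -> answer u a u' 0 v
| answer_step v v' : trans v a v' -> R u' v' -> answer u a u' 0 v
| answer_silent n v v' :
    trans v tau v' -> R u v' -> answer u a u' n v' -> answer u a u' (S n) v.

Definition answerable u a u' v : Prop := exists n, answer u a u' n v.

Lemma answerable_silent u a u' v v' :
  trans v tau v' -> R u v' -> answerable u a u' v' -> answerable u a u' v.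
Proof. intros Ht Hr [n Hn]. exists (S n). exact (answer_silent Ht Hr Hn). Qed.

Definition answer_rank u a u' v : nat :=
  epsilon (inhabits 0)
    (fun n => answer u a u' n v /\ forall m, answer u a u' m v -> n <= m).

Lemma answer_rank_spec u a u' v : answerable u a u' v ->
  answer u a u' (answer_rank u a u' v) v /\
  forall m, answer u a u' m v -> answer_rank u a u' v <= m.
Proof.
  intros Hv. unfold answer_rank. apply epsilon_spec.
  destruct (dec_inh_nat_subset_has_unique_least_element _ (fun n => classic _) Hv)
    as [n [Hn _]].
  exists n. exact Hn.
Qed.

Lemma best_answer u a u' v : answerable u a u' v ->
  (a = tau /\ R u' v) \/ (exists v', trans v a v' /\ R u' v') \/
  (exists v', trans v tau v' /\ R u v' /\ answerable u a u' v' /\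
              answer_rank u a u' v' < answer_rank u a u' v).
Proof.
  intros Hv. destruct (answer_rank_spec Hv) as [Hans _].
  remember (answer_rank u a u' v) as r.
  destruct Hans as [v Ht Hr|v v' Ht Hr|n v v' Ht Hr Hn]; [left; auto|right; left; eauto|].
  right; right. exists v'. repeat split; [exact Ht|exact Hr|exists n; exact Hn|].
  apply Nat.le_lt_trans with n; [apply (answer_rank_spec (ex_intro _ n Hn)), Hn|lia].
Qed.

End Answers.

Definition branching_bisimulation (R : State -> State -> Prop) : Prop :=
  forall u v, R u v -> R v u /\ forall a u', trans u a u' -> answerable R u a u' v.

Section BranchingFromBisimulation.
Variable R : State -> State -> Prop.
Hypothesis HR : branching_bisimulation R.

Definition binv (c : bconf State Label) : Prop :=
  match c with
  | BConf Spoiler u v _ _ => R u v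
  | BConf Duplicator u v (Some (a, u')) _ => answerable R u a u' v
  | BConf Duplicator _ _ None _ => False
  end.

(* A pending challenge weighs twice its answer rank, plus one while Spoiler is
   to move, so that Spoiler's repetition of the challenge also lowers it. *)
Definition brank (c : bconf State Label) : nat :=
  match c with
  | BConf Spoiler u v (Some (a, u')) _ => S (2 * answer_rank R u a u' v)
  | BConf Duplicator u v (Some (a, u')) _ => 2 * answer_rank R u a u' v
  | _ => 0
  end.

Lemma binv_spoiler c c' :
  binv c -> b_own c = Spoiler -> bmove tau trans c c' -> binv c'.
Proof.
  intros HI Ho Hm. destruct Hm; simpl in *; try discriminate.
  - apply (proj2 (HR HI)); assumption.
  - apply (proj2 (HR HI)); assumption.
  - apply (proj2 (HR (proj1 (HR HI)))); assumption.
Qed.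

Lemma bgood_reply_exists c : binv c -> b_own c = Duplicator ->
  exists c', good_reply (branching_game tau trans) binv brank c c'.
Proof.
  destruct c as [[|] u v [[a u']|] r]; simpl; intros HI Ho; try discriminate; [|contradiction].
  destruct (best_answer HI) as [[Ha Hr]|[[v' [Ht Hr]]|[v' [Ht [Hr [Hv' Hlt]]]]]].
  - exists (BConf Spoiler u' v None true).
    split; [apply bD1, Ha|split; [exact Hr|left; reflexivity]].
  - exists (BConf Spoiler u' v' None true).
    split; [eapply bD2, Ht|split; [exact Hr|left; reflexivity]].
  - exists (BConf Spoiler u v' (Some (a, u')) false).
    split; [eapply bD3, Ht|split; [exact Hr|right; simpl; lia]].
Qed.

Lemma brank_spoiler_descent c c' c'' :
  bmove tau trans c c' -> b_own c' = Spoiler -> b_rew c' <> true ->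
  bmove tau trans c' c'' -> b_rew c'' <> true -> brank c'' < brank c'.
Proof.
  intros Hm Ho Hr Hm' Hr'.
  destruct Hm; simpl in *; try discriminate; try congruence.
  inversion Hm'; subst; simpl in *; try congruence.
  match goal with H : _ \/ _ |- _ => destruct H as [E|E]; inversion E; subst end.
  simpl. lia.
Qed.

Lemma branching_bisimilar_of_bisimulation s t :
  R s t -> branching_bisimilar tau trans s t.
Proof.
  intros Hst. exists (@ranked_strategy (branching_game tau trans) binv brank).
  apply ranked_strategy_winning.
  - exact Hst.
  - exact binv_spoiler.
  - exact bgood_reply_exists.
  - exact brank_spoiler_descent.
Qed.

End BranchingFromBisimulation.

Section EmptyGenericFromBisimulation.
Variable R : State -> State -> Prop.
Hypothesis HR : branching_bisimulation R.

Definition einv (c : econf State Label) : Prop :=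
  match c with
  | EConf Spoiler u v None _ _ => R u v
  | EConf Spoiler u v (Some (a, u')) m _ =>
      R u v /\ m = Some (v, frown) /\ answerable R u a u' v
  | EConf Duplicator u v (Some (a, u')) m _ =>
      m = Some (v, frown) /\ answerable R u a u' v
  | EConf Duplicator _ _ None _ _ => False
  end.

Definition erank (c : econf State Label) : nat :=
  match c with
  | EConf Spoiler u v (Some (a, u')) _ _ => S (2 * answer_rank R u a u' v)
  | EConf Duplicator u v (Some (a, u')) _ _ => 2 * answer_rank R u a u' v
  | _ => 0
  end.

Lemma einv_spoiler_related c : einv c -> e_own c = Spoiler -> R (e_l c) (e_r c).
Proof. destruct c as [[|] u v [[a u']|] m r]; simpl; tauto || discriminate. Qed.

Lemma einv_spoiler c c' :
  einv c -> e_own c = Spoiler -> emove tau trans c c' -> einv c'.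
Proof.
  intros HI Ho Hm. pose proof (einv_spoiler_related _ HI Ho) as Huv.
  destruct Hm; simpl in *; try discriminate.
  - destruct c as [[a u']|]; [apply HI|congruence].
  - split; [reflexivity|apply (proj2 (HR Huv)); assumption].
  - split; [reflexivity|apply (proj2 (HR Huv)); assumption].
  - split; [reflexivity|apply (proj2 (HR (proj1 (HR Huv)))); assumption].
Qed.

Lemma egood_reply_exists c : einv c -> e_own c = Duplicator ->
  exists c', good_reply (empty_generic_game tau trans) einv erank c c'.
Proof.
  destruct c as [[|] u v [[a u']|] m r]; simpl; intros HI Ho; try discriminate; [|contradiction].
  destruct HI as [-> Hv].
  destruct (best_answer Hv) as [[Ha Hr]|[[v' [Ht Hr]]|[v' [Ht [Hr [Hv' Hlt]]]]]].
  - exists (EConf Spoiler u' v None None true).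
    split; [apply eD1, Ha|split; [exact Hr|left; reflexivity]].
  - exists (EConf Spoiler u' v' None None true).
    split; [eapply eD2b, Ht|split; [exact Hr|left; reflexivity]].
  - exists (EConf Spoiler u v' (Some (a, u')) (Some (v', frown)) false).
    split; [eapply eD3a, Ht|split; [simpl; auto|right; simpl; lia]].
Qed.

Lemma erank_spoiler_descent c c' c'' :
  emove tau trans c c' -> e_own c' = Spoiler -> e_rew c' <> true ->
  emove tau trans c' c'' -> e_rew c'' <> true -> erank c'' < erank c'.
Proof.
  intros Hm Ho Hr Hm' Hr'.
  destruct Hm; simpl in *; try discriminate; try congruence;
    inversion Hm'; subst; simpl in *; try congruence; lia.
Qed.

Lemma empty_generic_bisimilar_of_bisimulation s t :
  R s t -> empty_generic_bisimilar tau trans s t.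
Proof.
  intros Hst. exists (@ranked_strategy (empty_generic_game tau trans) einv erank).
  apply ranked_strategy_winning.
  - exact Hst.
  - exact einv_spoiler.
  - exact egood_reply_exists.
  - exact erank_spoiler_descent.
Qed.

End EmptyGenericFromBisimulation.

Section BisimulationFromBranching.
Variables (s t : State) (sigma : dstrategy (branching_game tau trans)).
Let c0 : bconf State Label := BConf Spoiler s t None false.
Hypothesis W : winning sigma c0.

Definition breached u v : Prop :=
  exists c r h, consistent sigma c0 (BConf Spoiler u v c r) h.

Definition brel u v : Prop := breached u v \/ breached v u.

Lemma brel_reached u v c r h :
  consistent sigma c0 (BConf Spoiler u v c r) h -> brel u v.
Proof. intros Hc. left. exists c, r, h. exact Hc. Qed.

Lemma bduplicator_stalls u w a u' r h :
  consistent sigma c0 (BConf Duplicator u w (Some (a, u')) r) h ->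
  ~ answerable brel u a u' w ->
  exists w', ~ answerable brel u a u' w' /\
    sigma (BConf Duplicator u w (Some (a, u')) r) h =
    BConf Spoiler u w' (Some (a, u')) false.
Proof.
  intros Hc Hna.
  pose proof (proj1 W _ _ Hc eq_refl) as Hm.
  pose proof (cons_duplicator Hc eq_refl) as Hc'.
  remember (sigma _ h) as c' eqn:E. clear E. simpl in Hm.
  inversion Hm; subst; pose proof (brel_reached Hc') as Hreach.
  - exfalso. apply Hna. exists 0. apply answer_tau; auto.
  - exfalso. apply Hna. exists 0. eapply answer_step; eassumption.
  - exists v'. split; [|reflexivity].
    intros Hv'. apply Hna. eapply answerable_silent; eassumption.
Qed.

Lemma bpending_answerable u v a u' r h :
  trans u a u' ->
  consistent sigma c0 (BConf Duplicator u v (Some (a, u')) r) h ->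
  answerable brel u a u' v.
Proof.
  intros Htr Hc. apply NNPP. intros Hna.
  destruct (bduplicator_stalls Hc Hna) as [w' [Hw' E]].
  pose proof (cons_duplicator Hc eq_refl) as Hc'. rewrite E in Hc'.
  refine (no_stalling W (fun w => ~ answerable brel u a u' w)
            (fun w => BConf Spoiler u w (Some (a, u')) false)
            (fun w => BConf Duplicator u w (Some (a, u')) false)
            _ _ _ _ _ Hw' Hc').
  - intros w. split; [reflexivity|]. apply bS1_same; [exact Htr|left; reflexivity].
  - reflexivity.
  - intros w. split; discriminate.
  - intros w h' Hw Hcw. exact (bduplicator_stalls Hcw Hw).
Qed.

Lemma bchallenge_answerable u v c r h a u' :
  consistent sigma c0 (BConf Spoiler u v c r) h -> trans u a u' ->
  answerable brel u a u' v.
Proof.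
  intros Hc Htr.
  destruct (classic (c = Some (a, u') \/ c = None));
    (eapply (bpending_answerable Htr); eapply cons_spoiler; [exact Hc|reflexivity|]).
  - apply bS1_same; assumption.
  - apply bS1_other; assumption.
Qed.

Lemma brel_bisimulation : branching_bisimulation brel.
Proof.
  intros u v Huv. split; [destruct Huv; [right|left]; assumption|].
  intros a u' Htr.
  destruct Huv as [[c [r [h Hc]]]|[c [r [h Hc]]]].
  - exact (bchallenge_answerable Hc Htr).
  - apply (bpending_answerable (r := true) (h := BConf Spoiler v u c r :: h) Htr).
    apply cons_spoiler; [exact Hc|reflexivity|]. apply bS2, Htr.
Qed.

Lemma brel_init : brel s t.
Proof. left. exists None, false, []. apply cons_init. Qed.

End BisimulationFromBranching.

(* Smiling markers only arise from D2a, which leaves the answered challenge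
   pending with its target as the new left state. *)
Definition marker_consistent (c : econf State Label) : Prop :=
  forall a x, e_c c = Some (a, x) ->
    e_m c = Some (e_r c, frown) \/ (e_m c = Some (e_r c, smile) /\ x = e_l c).

Lemma emove_marker_consistent c c' :
  marker_consistent c -> emove tau trans c c' -> marker_consistent c'.
Proof.
  intros Hc Hm a x E. destruct Hm; simpl in *; try discriminate.
  - exact (Hc a x E).
  - injection E as <- <-. auto.
  - injection E as <- <-. auto.
  - injection E as <- <-. auto.
  - injection E as <- <-. auto.
  - injection E as <- <-.
    destruct (Hc _ _ eq_refl) as [E|[E Eu]]; injection E as <- <-; auto.
Qed.

Section BisimulationFromEmptyGeneric.
Variables (s t : State) (sigma : dstrategy (empty_generic_game tau trans)).
Let c0 : econf State Label := EConf Spoiler s t None None false.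
Hypothesis W : winning sigma c0.

Definition ereached u v : Prop :=
  exists c m r h, consistent sigma c0 (EConf Spoiler u v c m r) h.

Definition erel u v : Prop := ereached u v \/ ereached v u.

Lemma erel_reached u v c m r h :
  consistent sigma c0 (EConf Spoiler u v c m r) h -> erel u v.
Proof. intros Hc. left. exists c, m, r, h. exact Hc. Qed.

Lemma consistent_marker_consistent c h :
  consistent sigma c0 c h -> marker_consistent c.
Proof.
  induction 1 as [|c h c' _ IH _ Hm|c h Hc IH Ho].
  - intros a x E. discriminate.
  - exact (emove_marker_consistent IH Hm).
  - exact (emove_marker_consistent IH (proj1 W _ _ Hc Ho)).
Qed.

Lemma efrown_stalls u w a u' r h :
  consistent sigma c0 (EConf Duplicator u w (Some (a, u')) (Some (w, frown)) r) h ->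
  ~ answerable erel u a u' w ->
  exists w', ~ answerable erel u a u' w' /\
    sigma (EConf Duplicator u w (Some (a, u')) (Some (w, frown)) r) h =
    EConf Spoiler u w' (Some (a, u')) (Some (w', frown)) false.
Proof.
  intros Hc Hna.
  pose proof (proj1 W _ _ Hc eq_refl) as Hm.
  pose proof (cons_duplicator Hc eq_refl) as Hc'.
  remember (sigma _ h) as c' eqn:E. clear E. simpl in Hm.
  inversion Hm; subst; pose proof (erel_reached Hc') as Hreach.
  - exfalso. apply Hna. exists 0. apply answer_tau; auto.
  - exfalso. apply Hna. exists 0. eapply answer_step; eassumption.
  - exfalso. apply Hna. exists 0. eapply answer_step; eassumption.
  - exists v'. split; [|reflexivity].
    intros Hv'. apply Hna. eapply answerable_silent; eassumption.
Qed.

Lemma efrown_answerable u v a u' r h :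
  consistent sigma c0 (EConf Duplicator u v (Some (a, u')) (Some (v, frown)) r) h ->
  answerable erel u a u' v.
Proof.
  intros Hc. apply NNPP. intros Hna.
  destruct (efrown_stalls Hc Hna) as [w' [Hw' E]].
  pose proof (cons_duplicator Hc eq_refl) as Hc'. rewrite E in Hc'.
  refine (no_stalling W (fun w => ~ answerable erel u a u' w)
            (fun w => EConf Spoiler u w (Some (a, u')) (Some (w, frown)) false)
            (fun w => EConf Duplicator u w (Some (a, u')) (Some (w, frown)) false)
            _ _ _ _ _ Hw' Hc').
  - intros w. split; [reflexivity|]. apply eS1. discriminate.
  - reflexivity.
  - intros w. split; discriminate.
  - intros w h' Hw Hcw. exact (efrown_stalls Hcw Hw).
Qed.

Lemma esmile_stalls x w a r h :
  trans x a x ->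
  consistent sigma c0 (EConf Duplicator x w (Some (a, x)) (Some (w, smile)) r) h ->
  ~ answerable erel x a x w ->
  exists w', ~ answerable erel x a x w' /\
    sigma (EConf Duplicator x w (Some (a, x)) (Some (w, smile)) r) h =
    EConf Spoiler x w' (Some (a, x)) (Some (w', smile)) false.
Proof.
  intros Htr Hc Hna.
  pose proof (proj1 W _ _ Hc eq_refl) as Hm.
  pose proof (cons_duplicator Hc eq_refl) as Hc'.
  remember (sigma _ h) as c' eqn:E. clear E. simpl in Hm.
  inversion Hm; subst; pose proof (erel_reached Hc') as Hreach.
  - exfalso. apply Hna. exists 0. apply answer_tau; auto.
  - exists v'. split; [|reflexivity].
    intros Hv'. apply Hna. eapply answerable_silent; eassumption.
  - (* D3b ends the round; Spoiler then re-issues [x -a-> x] afresh. *)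
    exfalso. apply Hna. eapply answerable_silent; [eassumption|eassumption|].
    eapply (efrown_answerable (r := false)).
    apply cons_spoiler; [exact Hc'|reflexivity|]. apply eS2a, Htr.
Qed.

Lemma esmile_answerable x v a r h :
  trans x a x ->
  consistent sigma c0 (EConf Duplicator x v (Some (a, x)) (Some (v, smile)) r) h ->
  answerable erel x a x v.
Proof.
  intros Htr Hc. apply NNPP. intros Hna.
  destruct (esmile_stalls Htr Hc Hna) as [w' [Hw' E]].
  pose proof (cons_duplicator Hc eq_refl) as Hc'. rewrite E in Hc'.
  refine (no_stalling W (fun w => ~ answerable erel x a x w)
            (fun w => EConf Spoiler x w (Some (a, x)) (Some (w, smile)) false)
            (fun w => EConf Duplicator x w (Some (a, x)) (Some (w, smile)) false)
            _ _ _ _ _ Hw' Hc').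
  - intros w. split; [reflexivity|]. apply eS1. discriminate.
  - reflexivity.
  - intros w. split; discriminate.
  - intros w h' Hw Hcw. exact (esmile_stalls Htr Hcw Hw).
Qed.

Lemma echallenge_answerable u v c m r h a u' :
  consistent sigma c0 (EConf Spoiler u v c m r) h -> trans u a u' ->
  answerable erel u a u' v.
Proof.
  intros Hc Htr.
  destruct (classic (c = Some (a, u'))) as [->|Hne].
  - assert (Hd : consistent sigma c0 (EConf Duplicator u v (Some (a, u')) m false)
                   (EConf Spoiler u v (Some (a, u')) m r :: h))
      by (apply cons_spoiler; [exact Hc|reflexivity|apply eS1; discriminate]).
    destruct (consistent_marker_consistent Hd eq_refl) as [Em|[Em Eu]];
      simpl in Em; subst m.
    + exact (efrown_answerable Hd).
    + simpl in Eu. subst u'. exact (esmile_answerable Htr Hd).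
  - apply (efrown_answerable (r := true) (h := EConf Spoiler u v c m r :: h)).
    apply cons_spoiler; [exact Hc|reflexivity|]. apply eS2b; assumption.
Qed.

Lemma erel_bisimulation : branching_bisimulation erel.
Proof.
  intros u v Huv. split; [destruct Huv; [right|left]; assumption|].
  intros a u' Htr.
  destruct Huv as [[c [m [r [h Hc]]]]|[c [m [r [h Hc]]]]].
  - exact (echallenge_answerable Hc Htr).
  - apply (efrown_answerable (r := true) (h := EConf Spoiler v u c m r :: h)).
    apply cons_spoiler; [exact Hc|reflexivity|]. apply eS3, Htr.
Qed.

Lemma erel_init : erel s t.
Proof. left. exists None, None, false, []. apply cons_init. Qed.

End BisimulationFromEmptyGeneric.

Lemma bisimulation_of_branching_bisimilar s t :
  branching_bisimilar tau trans s t ->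
  exists R, branching_bisimulation R /\ R s t.
Proof.
  intros [sigma W]. exists (brel s t sigma).
  split; [exact (brel_bisimulation W)|apply brel_init].
Qed.

Lemma bisimulation_of_empty_generic_bisimilar s t :
  empty_generic_bisimilar tau trans s t ->
  exists R, branching_bisimulation R /\ R s t.
Proof.
  intros [sigma W]. exists (erel s t sigma).
  split; [exact (erel_bisimulation W)|apply erel_init].
Qed.

End LTS.

Theorem theorem5p14 (S A : Type) (tau : A) (trans : S -> A -> S -> Prop)
  (s t : S) :
  branching_bisimilar tau trans s t <-> empty_generic_bisimilar tau trans s t.
Proof.
  split.
  - intros Hb.
    destruct (bisimulation_of_branching_bisimilar Hb) as [R [HR Hst]].
    exact (empty_generic_bisimilar_of_bisimulation HR s t Hst).
  - intros He.
    destruct (bisimulation_of_empty_generic_bisimilar He) as [R [HR Hst]].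
    exact (branching_bisimilar_of_bisimulation HR s t Hst).
Qed.
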